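(* Let $0\le b\le1$, $M>0$ and $0\le\alpha<1$, and let $r_0=r_0(\alpha)$ be the real root in $(0,1)$ of the equation \[2M\left(1+\frac{\alpha(1-r)\log(1-r)}{r}\right)=\big(2(1+M)(1-\alpha)+(2-\alpha)(M-4b)r\big)(1-r).\] Let $\mathcal{F}$ be the class of functions $f\in\mathcal{A}_b$, $f(z)=z+\sum_{n\ge2}a_nz^n$, with $|a_n|\le M/n$ for all $n\ge3$. Then: (i) every $f\in\mathcal{F}$ satisfies $\left|\frac{zf'(z)}{f(z)}-1\right|\le1-\alpha$ for $|z|\le r_0$; (ii) $r_0(\alpha)$ is the radius of starlikeness of order $\alpha$ of $\mathcal{F}$; (iii) $r_0(1/2)$ is the radius of parabolic starlikeness of $\mathcal{F}$. All results are sharp, with extremal function $f_0(z)=(1+M)z+(M/2-2b)z^2+M\log(1-z)=z-2bz^2-M\sum_{n\ge3}z^n/n$.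
   Context: $\mathbb{D}=\{z\in\mathbb{C}:|z|<1\}$; $\log(1-z)$ denotes the principal branch on $\mathbb{D}$, i.e. the branch vanishing at $z=0$. For $0\le b\le1$, $\mathcal{A}_b$ is the class of analytic functions $f$ on $\mathbb{D}$ of the form $f(z)=z+a_2z^2+a_3z^3+\cdots$ with $|a_2|=2b$. For a class $\mathcal{F}$ of analytic functions on $\mathbb{D}$ normalized by $f(0)=0$, $f'(0)=1$, and $0\le\alpha<1$, the radius of starlikeness of order $\alpha$ of $\mathcal{F}$ is the supremum of $r\in(0,1]$ such that every $f\in\mathcal{F}$ satisfies $f(z)\ne0$ for $0<|z|<r$ and $\operatorname{Re}\big(zf'(z)/f(z)\big)>\alpha$ for $|z|<r$ (the quotient being $1$ at $z=0$). The radius of parabolic starlikeness of $\mathcal{F}$ is the supremum of $r\in(0,1]$ such that every $f\in\mathcal{F}$ satisfies $\operatorname{Re}\big(zf'(z)/f(z)\big)>\left|zf'(z)/f(z)-1\right|$ for $|z|<r$. *)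

From Stdlib Require Import Reals.
From Coquelicot Require Import Coquelicot.

Local Open Scope R_scope.

(* Sum of a complex series, computed componentwise (the sum of the series
   whenever it converges, which is always the case below on the unit disc). *)
Definition CSeries (u : nat -> C) : C :=
  (Series (fun n => Re (u n)), Series (fun n => Im (u n))).

(* The analytic function f(z) = sum_n a_n z^n on the unit disc, given by its
   Taylor coefficients a, and its derivative f'(z) = sum_n (n+1) a_(n+1) z^n. *)
Definition fval (a : nat -> C) (z : C) : C :=
  CSeries (fun n => (a n * z ^ n)%C).
Definition dval (a : nat -> C) (z : C) : C :=
  CSeries (fun n => (RtoC (INR (S n)) * a (S n) * z ^ n)%C).

Definition quot (a : nat -> C) (z : C) : C :=
  if Ceq_dec z 0%C then 1%C else (z * dval a z / fval a z)%C.

(* The class F: f in A_b (a_0 = 0, a_1 = 1, |a_2| = 2b) with |a_n| <= M/n, n >= 3. *)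
Definition classF (M b : R) (a : nat -> C) : Prop :=
  a 0%nat = 0%C /\ a 1%nat = 1%C /\ Cmod (a 2%nat) = 2 * b /\
  forall n : nat, (3 <= n)%nat -> Cmod (a n) <= M / INR n.

Definition r0_eq (M b alpha r : R) : Prop :=
  2 * M * (1 + alpha * (1 - r) * ln (1 - r) / r) =
  (2 * (1 + M) * (1 - alpha) + (2 - alpha) * (M - 4 * b) * r) * (1 - r).

Definition is_r0 (M b alpha r : R) : Prop :=
  0 < r < 1 /\ r0_eq M b alpha r /\
  forall s : R, 0 < s < 1 -> r0_eq M b alpha s -> s = r.

(* Radius of starlikeness of order alpha of F = sup of this set. *)
Definition starlike_radii (M b alpha : R) (r : R) : Prop :=
  0 < r <= 1 /\
  forall a, classF M b a ->
    (forall z : C, 0 < Cmod z < r -> fval a z <> 0%C) /\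
    (forall z : C, Cmod z < r -> Re (quot a z) > alpha).

(* Radius of parabolic starlikeness of F = sup of this set. *)
Definition parabolic_radii (M b : R) (r : R) : Prop :=
  0 < r <= 1 /\
  forall a, classF M b a ->
    forall z : C, Cmod z < r -> Re (quot a z) > Cmod (quot a z - 1)%C.

(* Write [f z = z (1 + T z)], so that [z f' z = z (1 + T z + U z)] and
   [z f'/f - 1 = U / (1 + T)], where [T z = sum a_(n+2) z^(n+1)] and
   [U z = sum (n+1) a_(n+2) z^(n+1)].  On [|z| = r] the coefficient bounds give
   [|T| <= majT r] and [|U| <= majU r], hence [|zf'/f - 1| <= majU / (1 - majT)],
   which is at most [1 - al] as long as [majG al r = majU r + (1 - al) majT r]
   stays below [1 - al].  [majG al] is strictly increasing and, summed in closed
   form, equals [1 - al] exactly at the root [r0] of the defining equation.  The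
   extremal function [f_0] has coefficients [- maj] from [a_2] on, so at [z = r] it has
   [T = - majT r] and [U = - majU r]; just beyond [r0] its [zf'/f] is real and
   smaller than [al], which gives sharpness for both radii. *)

From Stdlib Require Import Reals Lra Lia Psatz.
From Coquelicot Require Import Coquelicot.
Local Open Scope R_scope.

Lemma ex_series_geom_dominated (u : nat -> R) (K r : R) :
  0 <= r < 1 -> (forall n, Rabs (u n) <= K * r ^ n) -> ex_series u.
Proof.
  intros Hr Hu. apply (ex_series_le u (fun n => K * r ^ n)); [exact Hu |].
  apply (ex_series_scal_l K (fun n => r ^ n)), ex_series_geom.
  rewrite Rabs_pos_eq; lra.
Qed.

Lemma Series_nonneg (u : nat -> R) :
  (forall n, 0 <= u n) -> ex_series u -> 0 <= Series u.
Proof.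
  intros Hu Eu. replace 0 with (Series (fun n => 0 * u n)) by (rewrite Series_scal_l; ring).
  apply Series_le; [| exact Eu]. intros n; specialize (Hu n); split; lra.
Qed.

Lemma Series_le_ex (u v : nat -> R) :
  (forall n, u n <= v n) -> ex_series u -> ex_series v -> Series u <= Series v.
Proof.
  intros Huv Eu Ev.
  assert (0 <= Series (fun n => v n - u n)).
  { apply Series_nonneg; [intros n; specialize (Huv n); lra | exact (ex_series_minus v u Ev Eu)]. }
  rewrite Series_minus in H by assumption. lra.
Qed.

(* Strict at index 1 only: that is where the majorant series first involve [M > 0]. *)
Lemma Series_lt_at_1 (u v : nat -> R) :
  (forall n, u n <= v n) -> u 1%nat < v 1%nat ->
  ex_series u -> ex_series v -> Series u < Series v.
Proof.
  intros Huv H1 Eu Ev.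
  assert (E := ex_series_minus v u Ev Eu).
  assert (Htail : 0 <= Series (fun k => v (2 + k)%nat - u (2 + k)%nat)).
  { apply Series_nonneg; [intros n; specialize (Huv (2 + n)%nat); lra |].
    exact (proj1 (ex_series_incr_n _ 2) E). }
  assert (0 < Series (fun n => v n - u n)).
  { rewrite (Series_incr_n _ 2); [simpl | lia | exact E].
    simpl in Htail. specialize (Huv 0%nat). lra. }
  rewrite Series_minus in H by assumption. lra.
Qed.

Lemma CV_radius_gt_of_bounded (c : nat -> R) (K x : R) :
  (forall n, Rabs (c n) <= K) -> Rabs x < 1 -> Rbar_lt (Rabs x) (CV_radius c).
Proof.
  intros Hc Hx. set (y := (Rabs x + 1) / 2).
  assert (Hx0 := Rabs_pos x).
  assert (Hy : Rbar_le y (CV_radius c)).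
  { apply CV_radius_bounded. exists K. intros n. rewrite Rabs_mult.
    assert (Hyn : Rabs (y ^ n) <= 1).
    { rewrite <- RPow_abs, Rabs_pos_eq by (unfold y; lra).
      rewrite <- (pow1 n). apply pow_incr. unfold y; lra. }
    assert (0 <= Rabs (c n)) by apply Rabs_pos.
    assert (0 <= Rabs (y ^ n)) by apply Rabs_pos.
    specialize (Hc n). nra. }
  apply Rbar_lt_le_trans with y; [simpl; unfold y; lra | exact Hy].
Qed.

(* The Taylor coefficients of [- ln (1 - x)]. *)
Definition inv_nat (n : nat) : R := match n with O => 0 | S _ => / INR n end.

Lemma inv_nat_bound n : Rabs (inv_nat n) <= 1.
Proof.
  destruct n as [|m]; unfold inv_nat; [rewrite Rabs_R0; lra |].
  assert (H1 : 1 <= INR (S m)) by (apply (le_INR 1); lia).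
  rewrite Rabs_pos_eq by (left; apply Rinv_0_lt_compat; lra).
  rewrite <- Rinv_1. apply Rinv_le_contravar; lra.
Qed.

Lemma PSeries_inv_nat x : 0 <= x < 1 -> PSeries inv_nat x = - ln (1 - x).
Proof.
  intros Hx.
  assert (Hderiv : forall t, 0 <= t < 1 ->
    is_derive (fun y => PSeries inv_nat y + ln (1 - y)) t 0).
  { intros t Ht.
    assert (Hr : Rbar_lt (Rabs t) (CV_radius inv_nat)).
    { apply (CV_radius_gt_of_bounded _ 1); [apply inv_nat_bound | rewrite Rabs_pos_eq; lra]. }
    assert (HPS : PSeries (PS_derive inv_nat) t = / (1 - t)).
    { rewrite <- Series_geom by (rewrite Rabs_pos_eq; lra). apply Series_ext. intros n.
      unfold PS_derive, inv_nat. rewrite Rinv_r; [ring | apply not_0_INR; lia]. }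
    replace 0 with (/ (1 - t) + - / (1 - t)) by ring.
    apply (is_derive_plus (PSeries inv_nat) (fun y => ln (1 - y))).
    - rewrite <- HPS. exact (is_derive_PSeries _ _ Hr).
    - auto_derive; [lra | field; lra]. }
  destruct (Req_dec x 0) as [->|Hx0].
  - rewrite PSeries_0, Rminus_0_r, ln_1. simpl. ring.
  - assert (E : (fun y => PSeries inv_nat y + ln (1 - y)) 0
              = (fun y => PSeries inv_nat y + ln (1 - y)) x).
    { apply (eq_is_derive (fun y => PSeries inv_nat y + ln (1 - y)) 0 x); [| lra].
      intros t Ht. apply Hderiv. lra. }
    cbv beta in E. rewrite PSeries_0, Rminus_0_r, ln_1 in E. simpl in E. lra.
Qed.

Lemma ex_series_inv_nat r : 0 <= r < 1 -> ex_series (fun n => inv_nat n * r ^ n).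
Proof.
  intros Hr. apply (ex_series_geom_dominated _ 1 r Hr). intros n.
  rewrite Rabs_mult, <- RPow_abs, (Rabs_pos_eq r) by lra.
  assert (H := inv_nat_bound n). assert (0 <= r ^ n) by (apply pow_le; lra).
  assert (0 <= Rabs (inv_nat n)) by apply Rabs_pos. nra.
Qed.

Lemma Series_inv_nat_tail3 r : 0 <= r < 1 ->
  Series (fun k => inv_nat (3 + k) * r ^ (3 + k)) = - ln (1 - r) - r - r ^ 2 / 2.
Proof.
  intros Hr. rewrite <- PSeries_inv_nat by exact Hr. unfold PSeries.
  rewrite (Series_incr_n (fun n => inv_nat n * r ^ n) 3); [| lia | exact (ex_series_inv_nat r Hr)].
  unfold inv_nat. simpl. field.
Qed.

Lemma Cmod_Im_le (c : C) : Rabs (Im c) <= Cmod c.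
Proof.
  assert (H := Cmod2_alt c). assert (H0 := Cmod_ge_0 c).
  assert (E : Rabs (Im c) ^ 2 = Im c ^ 2) by apply pow2_abs.
  assert (0 <= Rabs (Im c)) by apply Rabs_pos.
  assert (Re c ^ 2 >= 0) by nra. nra.
Qed.

Definition abs_summable (u : nat -> C) : Prop := ex_series (fun n => Cmod (u n)).

Lemma abs_summable_Re u : abs_summable u -> ex_series (fun n => Re (u n)).
Proof.
  intros H. apply (@ex_series_le R_AbsRing R_CompleteNormedModule _ _ (fun n => re_le_Cmod (u n)) H).
Qed.

Lemma abs_summable_Im u : abs_summable u -> ex_series (fun n => Im (u n)).
Proof.
  intros H. apply (@ex_series_le R_AbsRing R_CompleteNormedModule _ _ (fun n => Cmod_Im_le (u n)) H).
Qed.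

Lemma abs_summable_geom_dominated (u : nat -> C) (K r : R) :
  0 <= r < 1 -> (forall n, Cmod (u n) <= K * r ^ n) -> abs_summable u.
Proof.
  intros Hr Hu. apply (ex_series_geom_dominated _ K r Hr). intros n.
  rewrite Rabs_pos_eq by apply Cmod_ge_0. apply Hu.
Qed.

Lemma abs_summable_scal c u : abs_summable u -> abs_summable (fun n => (c * u n)%C).
Proof.
  intros H. apply (ex_series_ext (fun n => Cmod c * Cmod (u n))).
  - intros n. symmetry. apply Cmod_mult.
  - exact (ex_series_scal_l (Cmod c) _ H).
Qed.

Lemma abs_summable_plus u v :
  abs_summable u -> abs_summable v -> abs_summable (fun n => (u n + v n)%C).
Proof.
  intros Hu Hv.
  apply (@ex_series_le R_AbsRing R_CompleteNormedModule _ (fun n => Cmod (u n) + Cmod (v n))).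
  - intros n. change (norm (Cmod (u n + v n)%C)) with (Rabs (Cmod (u n + v n)%C)).
    rewrite Rabs_pos_eq by apply Cmod_ge_0. apply Cmod_triangle.
  - exact (ex_series_plus _ _ Hu Hv).
Qed.

Lemma abs_summable_incr_1 u : abs_summable u -> abs_summable (fun n => u (S n)).
Proof. exact (proj1 (ex_series_incr_1 (fun n => Cmod (u n)))). Qed.

Lemma CSeries_ext u v : (forall n, u n = v n) -> CSeries u = CSeries v.
Proof. intros H. unfold CSeries. f_equal; apply Series_ext; intros n; rewrite H; reflexivity. Qed.

Lemma CSeries_plus u v : abs_summable u -> abs_summable v ->
  CSeries (fun n => (u n + v n)%C) = (CSeries u + CSeries v)%C.
Proof.
  intros Hu Hv. unfold CSeries. apply injective_projections; simpl.
  - rewrite <- Series_plus by (apply abs_summable_Re; assumption). reflexivity.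
  - rewrite <- Series_plus by (apply abs_summable_Im; assumption). reflexivity.
Qed.

Lemma CSeries_scal c u : abs_summable u -> CSeries (fun n => (c * u n)%C) = (c * CSeries u)%C.
Proof.
  intros Hu. assert (Hr := abs_summable_Re u Hu). assert (Hi := abs_summable_Im u Hu).
  unfold CSeries. apply injective_projections; simpl; rewrite <- !Series_scal_l.
  - rewrite <- Series_minus; [reflexivity | exact (ex_series_scal_l _ _ Hr) | exact (ex_series_scal_l _ _ Hi)].
  - rewrite <- Series_plus; [reflexivity | exact (ex_series_scal_l _ _ Hi) | exact (ex_series_scal_l _ _ Hr)].
Qed.

Lemma CSeries_incr_1 u : abs_summable u -> CSeries u = (u 0%nat + CSeries (fun n => u (S n)))%C.
Proof.
  intros Hu. unfold CSeries. apply injective_projections; simpl; apply Series_incr_1.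
  - exact (abs_summable_Re u Hu).
  - exact (abs_summable_Im u Hu).
Qed.

Lemma CSeries_RtoC (v : nat -> R) : CSeries (fun n => RtoC (v n)) = RtoC (Series v).
Proof.
  unfold CSeries. apply injective_projections; simpl; [reflexivity |].
  transitivity (Series (fun n => 0 * v n)).
  - apply Series_ext. intros n. simpl. ring.
  - rewrite Series_scal_l. ring.
Qed.

(* Writing [w] for the sum, [|w|^2 = Re (conj w * w)] is the series of
   [Re (conj w * u n) <= |w| |u n|]. *)
Lemma Cmod_CSeries_le u : abs_summable u -> Cmod (CSeries u) <= Series (fun n => Cmod (u n)).
Proof.
  intros Hu. set (w := CSeries u). set (S := Series (fun n => Cmod (u n))).
  assert (HS : 0 <= S) by (apply Series_nonneg; [intros; apply Cmod_ge_0 | exact Hu]).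
  assert (Hw := Cmod_ge_0 w).
  assert (ERe := ex_series_scal_l (Re w) _ (abs_summable_Re u Hu)).
  assert (EIm := ex_series_scal_l (Im w) _ (abs_summable_Im u Hu)).
  assert (E : Cmod w ^ 2 = Series (fun n => Re w * Re (u n) + Im w * Im (u n))).
  { rewrite Series_plus, !Series_scal_l by assumption.
    rewrite Cmod2_alt. unfold w at 2 4. unfold CSeries. simpl. ring. }
  assert (L : Series (fun n => Re w * Re (u n) + Im w * Im (u n))
              <= Series (fun n => Cmod w * Cmod (u n))).
  { apply Series_le_ex.
    - intros n. assert (H1 := re_le_Cmod (Cconj w * u n)%C).
      rewrite Cmod_mult, Cmod_conj in H1.
      assert (H2 := Rle_abs (Re (Cconj w * u n)%C)).
      replace (Re w * Re (u n) + Im w * Im (u n)) with (Re (Cconj w * u n)%C); [lra |].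
      clearbody w. destruct w, (u n). simpl. ring.
    - exact (ex_series_plus _ _ ERe EIm).
    - exact (ex_series_scal_l (Cmod w) _ Hu). }
  rewrite Series_scal_l in L. fold S in L. nra.
Qed.

(* [maj M b n] bounds [|a (n + 2)|] on the class: [2 b] for [a_2], [M / (n + 2)] beyond. *)
Definition maj (M b : R) (n : nat) : R :=
  match n with O => 2 * b | S _ => M / INR (S (S n)) end.

Section Majorants.
Variables (M b : R).
Hypotheses (Hb : 0 <= b) (HM : 0 < M).

Definition majT (r : R) : R := Series (fun n => maj M b n * r ^ S n).
Definition majU (r : R) : R := Series (fun n => INR (S n) * maj M b n * r ^ S n).
Definition majG (al r : R) : R :=
  Series (fun n => (INR (S n) + 1 - al) * maj M b n * r ^ S n).

Lemma INR_S_pos n : 0 < INR (S n).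
Proof. apply lt_0_INR. lia. Qed.

Lemma maj_nonneg n : 0 <= maj M b n.
Proof.
  destruct n; unfold maj; [lra |].
  apply Rdiv_le_0_compat; [lra | apply INR_S_pos].
Qed.

Lemma maj_weighted_le n : INR (S (S n)) * maj M b n <= 4 * b + M.
Proof.
  destruct n; unfold maj.
  - simpl. lra.
  - assert (H := INR_S_pos (S (S n))). unfold Rdiv.
    rewrite Rmult_comm, Rmult_assoc, Rinv_l; lra.
Qed.

Lemma ex_series_maj_weighted (w : nat -> R) r : 0 <= r < 1 ->
  (forall n, 0 <= w n <= INR (S (S n))) -> ex_series (fun n => w n * maj M b n * r ^ S n).
Proof.
  intros Hr Hw. apply (ex_series_geom_dominated _ (4 * b + M) r Hr). intros n.
  assert (H1 := maj_weighted_le n). assert (H2 := maj_nonneg n). specialize (Hw n).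
  assert (0 <= r ^ n) by (apply pow_le; lra).
  assert (H3 : 0 <= r ^ S n <= r ^ n) by (simpl; split; nra).
  rewrite Rabs_pos_eq by (apply Rmult_le_pos; [apply Rmult_le_pos |]; lra).
  assert (w n * maj M b n <= 4 * b + M) by nra. nra.
Qed.

Lemma ex_series_majT r : 0 <= r < 1 -> ex_series (fun n => maj M b n * r ^ S n).
Proof.
  intros Hr. apply (ex_series_ext (fun n => 1 * maj M b n * r ^ S n)); [intros n; rewrite Rmult_1_l; reflexivity |].
  apply ex_series_maj_weighted; [exact Hr |]. intros n. rewrite !S_INR.
  assert (H := pos_INR n). lra.
Qed.

Lemma ex_series_majU r : 0 <= r < 1 -> ex_series (fun n => INR (S n) * maj M b n * r ^ S n).
Proof.
  intros Hr. apply ex_series_maj_weighted; [exact Hr |]. intros n.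
  rewrite (S_INR (S n)). assert (H := pos_INR (S n)). lra.
Qed.

Lemma ex_series_majG al r : 0 <= al < 1 -> 0 <= r < 1 ->
  ex_series (fun n => (INR (S n) + 1 - al) * maj M b n * r ^ S n).
Proof.
  intros Hal Hr. apply ex_series_maj_weighted; [exact Hr |]. intros n.
  rewrite (S_INR (S n)). assert (H := pos_INR (S n)). lra.
Qed.

Lemma majG_split al r : 0 <= r < 1 -> majG al r = majU r + (1 - al) * majT r.
Proof.
  intros Hr. unfold majG, majU, majT. rewrite <- Series_scal_l, <- Series_plus.
  - apply Series_ext. intros n. ring.
  - exact (ex_series_majU r Hr).
  - exact (ex_series_scal_l _ _ (ex_series_majT r Hr)).
Qed.

Lemma majT_nonneg r : 0 <= r < 1 -> 0 <= majT r.
Proof.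
  intros Hr. apply Series_nonneg; [| exact (ex_series_majT r Hr)]. intros n.
  apply Rmult_le_pos; [apply maj_nonneg | apply pow_le; lra].
Qed.

Lemma majT_le_majU r : 0 <= r < 1 -> majT r <= majU r.
Proof.
  intros Hr. apply Series_le_ex; [| exact (ex_series_majT r Hr) | exact (ex_series_majU r Hr)].
  intros n. assert (H1 := maj_nonneg n). assert (0 <= r ^ S n) by (apply pow_le; lra).
  assert (1 <= INR (S n)) by (apply (le_INR 1); lia).
  assert (0 <= maj M b n * r ^ S n) by nra. nra.
Qed.

Lemma majG_lt al r s : 0 <= al < 1 -> 0 <= r < s -> s < 1 -> majG al r < majG al s.
Proof.
  intros Hal Hrs Hs.
  apply Series_lt_at_1; [| | apply ex_series_majG; lra ..].
  - intros n. assert (H1 := maj_nonneg n). assert (1 <= INR (S n)) by (apply (le_INR 1); lia).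
    assert (r ^ S n <= s ^ S n) by (apply pow_incr; lra).
    assert (0 <= (INR (S n) + 1 - al) * maj M b n) by nra. nra.
  - unfold maj. simpl INR.
    assert (0 < M / (1 + 1 + 1)) by (apply Rdiv_lt_0_compat; lra).
    assert (r ^ 2 < s ^ 2) by (simpl; nra).
    apply Rmult_lt_compat_l; [apply Rmult_lt_0_compat; lra | exact H0].
Qed.

(* The summand for [n >= 1] is [M r^(n+1) - al (M / r) r^(n+2) / (n+2)]. *)
Lemma majG_closed al r : 0 <= al < 1 -> 0 < r < 1 ->
  majG al r = (2 - al) * (2 * b) * r + M * (r ^ 2 / (1 - r))
              - al * (M / r) * (- ln (1 - r) - r - r ^ 2 / 2).
Proof.
  intros Hal Hr. unfold majG.
  rewrite Series_incr_1 by (apply ex_series_majG; lra).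
  rewrite (Series_ext _ (fun k => M * r ^ 2 * r ^ k
                                  - al * (M / r) * (inv_nat (3 + k) * r ^ (3 + k)))).
  2:{ intros k. change (3 + k)%nat with (S (S (S k))).
      unfold maj, inv_nat. rewrite !S_INR. simpl pow.
      assert (H := pos_INR k). field. lra. }
  assert (Etail := proj1 (ex_series_incr_n _ 3) (ex_series_inv_nat r ltac:(lra))).
  rewrite Series_minus, !Series_scal_l, Series_geom, Series_inv_nat_tail3.
  - simpl. field. lra.
  - lra.
  - rewrite Rabs_pos_eq; lra.
  - exact (ex_series_scal_l _ _ (ex_series_geom r ltac:(rewrite Rabs_pos_eq; lra))).
  - exact (ex_series_scal_l _ _ Etail).
Qed.

Lemma majG_eq_of_r0_eq al r : 0 <= al < 1 -> 0 < r < 1 ->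
  r0_eq M b al r -> majG al r = 1 - al.
Proof.
  intros Hal Hr Heq. rewrite majG_closed by assumption. unfold r0_eq in Heq.
  set (L := ln (1 - r)) in *.
  assert (K : ((2 - al) * (2 * b) * r + M * (r ^ 2 / (1 - r)) - al * (M / r) * (- L - r - r ^ 2 / 2)
               - (1 - al)) * (2 * (1 - r))
              = 2 * M * (1 + al * (1 - r) * L / r)
                - (2 * (1 + M) * (1 - al) + (2 - al) * (M - 4 * b) * r) * (1 - r))
    by (field; lra).
  rewrite Heq, Rminus_diag in K.
  apply Rmult_integral in K. destruct K; lra.
Qed.

Lemma majT_continuous r : 0 <= r < 1 -> continuity_pt majT r.
Proof.
  intros Hr. apply (continuity_pt_ext (fun y => y * PSeries (maj M b) y)).
  - intros y. unfold majT, PSeries. rewrite <- Series_scal_l.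
    apply Series_ext. intros n. simpl. ring.
  - apply continuity_pt_mult; [apply continuity_pt_id |].
    apply PSeries_continuity, (CV_radius_gt_of_bounded _ (4 * b + M)).
    + intros n. rewrite Rabs_pos_eq by apply maj_nonneg.
      assert (H := maj_weighted_le n). assert (H0 := maj_nonneg n).
      assert (1 <= INR (S (S n))) by (apply (le_INR 1); lia). nra.
    + rewrite Rabs_pos_eq; lra.
Qed.

End Majorants.

Section ClassF.
Variables (M b : R) (a : nat -> C).
Hypotheses (Hb : 0 <= b) (HM : 0 < M) (Ha : classF M b a).

Lemma classF_coef_le_maj n : Cmod (a (S (S n))) <= maj M b n.
Proof.
  destruct Ha as (_ & _ & H2 & H3). destruct n as [|m].
  - rewrite H2. simpl. lra.
  - apply H3. lia.
Qed.

Lemma classF_weighted_coef_le n : INR n * Cmod (a n) <= 1 + 4 * b + M.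
Proof.
  destruct Ha as (H0 & H1 & _ & _). destruct n as [|[|m]].
  - simpl. assert (H := Cmod_ge_0 (a 0%nat)). lra.
  - rewrite H1, Cmod_1. simpl. lra.
  - assert (H := classF_coef_le_maj m). assert (H' := maj_weighted_le M b Hb HM m).
    assert (0 < INR (S (S m))) by apply INR_S_pos.
    assert (INR (S (S m)) * Cmod (a (S (S m))) <= INR (S (S m)) * maj M b m)
      by (apply Rmult_le_compat_l; lra). lra.
Qed.

Lemma classF_coef_le n : Cmod (a n) <= 1 + 4 * b + M.
Proof.
  destruct n as [|n].
  - destruct Ha as (H0 & _). rewrite H0, Cmod_0. lra.
  - assert (H := classF_weighted_coef_le (S n)). assert (H0 := Cmod_ge_0 (a (S n))).
    assert (1 <= INR (S n)) by (apply (le_INR 1); lia). nra.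
Qed.

Variable z : C.
Hypothesis Hz : Cmod z < 1.

Definition tailT (n : nat) : C := (a (S (S n)) * z ^ S n)%C.
Definition tailU (n : nat) : C := (INR (S n) * a (S (S n)) * z ^ S n)%C.

Let Hz_range : 0 <= Cmod z < 1.
Proof. split; [apply Cmod_ge_0 | exact Hz]. Qed.

Lemma Cmod_tailT_le n : Cmod (tailT n) <= maj M b n * Cmod z ^ S n.
Proof.
  unfold tailT. rewrite Cmod_mult, Cmod_pow.
  apply Rmult_le_compat_r; [apply pow_le, Cmod_ge_0 | apply classF_coef_le_maj].
Qed.

Lemma Cmod_tailU_le n : Cmod (tailU n) <= INR (S n) * maj M b n * Cmod z ^ S n.
Proof.
  unfold tailU. rewrite !Cmod_mult, Cmod_pow, Cmod_R, Rabs_pos_eq by apply pos_INR.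
  apply Rmult_le_compat_r; [apply pow_le, Cmod_ge_0 |].
  apply Rmult_le_compat_l; [apply pos_INR | apply classF_coef_le_maj].
Qed.

Lemma abs_summable_tailT : abs_summable tailT.
Proof.
  apply (ex_series_le (fun n => Cmod (tailT n)) (fun n => maj M b n * Cmod z ^ S n)).
  - intros n. change (norm (Cmod (tailT n))) with (Rabs (Cmod (tailT n))).
    rewrite Rabs_pos_eq by apply Cmod_ge_0. apply Cmod_tailT_le.
  - exact (ex_series_majT M b Hb HM _ Hz_range).
Qed.

Lemma abs_summable_tailU : abs_summable tailU.
Proof.
  apply (ex_series_le (fun n => Cmod (tailU n)) (fun n => INR (S n) * maj M b n * Cmod z ^ S n)).
  - intros n. change (norm (Cmod (tailU n))) with (Rabs (Cmod (tailU n))).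
    rewrite Rabs_pos_eq by apply Cmod_ge_0. apply Cmod_tailU_le.
  - exact (ex_series_majU M b Hb HM _ Hz_range).
Qed.

Lemma abs_summable_fval : abs_summable (fun n => (a n * z ^ n)%C).
Proof.
  apply (abs_summable_geom_dominated _ (1 + 4 * b + M) (Cmod z) Hz_range). intros n.
  rewrite Cmod_mult, Cmod_pow. apply Rmult_le_compat_r; [apply pow_le, Cmod_ge_0 |].
  apply classF_coef_le.
Qed.

Lemma abs_summable_dval : abs_summable (fun n => (INR (S n) * a (S n) * z ^ n)%C).
Proof.
  apply (abs_summable_geom_dominated _ (1 + 4 * b + M) (Cmod z) Hz_range). intros n.
  rewrite !Cmod_mult, Cmod_pow, Cmod_R, Rabs_pos_eq by apply pos_INR.
  apply Rmult_le_compat_r; [apply pow_le, Cmod_ge_0 | apply classF_weighted_coef_le].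
Qed.

Lemma fval_factor : fval a z = (z * (1 + CSeries tailT))%C.
Proof.
  destruct Ha as (H0 & H1 & _).
  unfold fval. rewrite (CSeries_incr_1 _ abs_summable_fval).
  rewrite (CSeries_incr_1 _ (abs_summable_incr_1 _ abs_summable_fval)).
  rewrite (CSeries_ext _ (fun n => (z * tailT n)%C)) by (intros n; unfold tailT; simpl; ring).
  rewrite (CSeries_scal _ _ abs_summable_tailT), H0, H1. simpl. ring.
Qed.

Lemma z_dval_factor : (z * dval a z)%C = (z * (1 + CSeries tailT + CSeries tailU))%C.
Proof.
  destruct Ha as (_ & H1 & _).
  unfold dval. rewrite <- (CSeries_scal _ _ abs_summable_dval).
  rewrite (CSeries_incr_1 _ (abs_summable_scal z _ abs_summable_dval)).
  rewrite (CSeries_ext _ (fun n => (z * (tailU n + tailT n))%C)).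
  2:{ intros n. unfold tailT, tailU. rewrite (S_INR (S n)), RtoC_plus. simpl. ring. }
  rewrite (CSeries_scal _ _ (abs_summable_plus _ _ abs_summable_tailU abs_summable_tailT)).
  rewrite (CSeries_plus _ _ abs_summable_tailU abs_summable_tailT), H1. simpl. ring.
Qed.

Lemma quot_factor : z <> 0%C -> (1 + CSeries tailT)%C <> 0%C ->
  quot a z = (1 + CSeries tailU / (1 + CSeries tailT))%C.
Proof.
  intros Hz0 HT. unfold quot. destruct (Ceq_dec z 0) as [E|_]; [contradiction |].
  rewrite z_dval_factor, fval_factor. field. split; assumption.
Qed.

Lemma Cmod_CSeries_tailT_le : Cmod (CSeries tailT) <= majT M b (Cmod z).
Proof.
  eapply Rle_trans; [exact (Cmod_CSeries_le _ abs_summable_tailT) |].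
  apply Series_le; [| exact (ex_series_majT M b Hb HM _ Hz_range)].
  intros n; split; [apply Cmod_ge_0 | apply Cmod_tailT_le].
Qed.

Lemma Cmod_CSeries_tailU_le : Cmod (CSeries tailU) <= majU M b (Cmod z).
Proof.
  eapply Rle_trans; [exact (Cmod_CSeries_le _ abs_summable_tailU) |].
  apply Series_le; [| exact (ex_series_majU M b Hb HM _ Hz_range)].
  intros n; split; [apply Cmod_ge_0 | apply Cmod_tailU_le].
Qed.

End ClassF.

Lemma Cmod_pos_neq_0 (w : C) : 0 < Cmod w -> w <> 0%C.
Proof. intros H E. rewrite E, Cmod_0 in H. lra. Qed.

Lemma classF_quot_estimate M b a z : 0 <= b -> 0 < M -> classF M b a ->
  0 < Cmod z < 1 -> majT M b (Cmod z) < 1 ->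
  fval a z <> 0%C /\ Cmod (quot a z - 1)%C * (1 - majT M b (Cmod z)) <= majU M b (Cmod z).
Proof.
  intros Hb HM Ha Hz HQ.
  assert (HT := Cmod_CSeries_tailT_le M b a Hb HM Ha z (proj2 Hz)).
  assert (HU := Cmod_CSeries_tailU_le M b a Hb HM Ha z (proj2 Hz)).
  set (T := CSeries (tailT a z)) in *. set (U := CSeries (tailU a z)) in *.
  assert (H1T : 1 - majT M b (Cmod z) <= Cmod (1 + T)%C).
  { assert (H := Cmod_triangle (1 + T)%C (- T)%C).
    replace (1 + T + - T)%C with (RtoC 1) in H by ring. rewrite Cmod_1, Cmod_opp in H. lra. }
  assert (HT0 : (1 + T)%C <> 0%C) by (apply Cmod_pos_neq_0; lra).
  assert (Hz0 : z <> 0%C) by (apply Cmod_pos_neq_0; lra).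
  split.
  - rewrite (fval_factor M b a Hb HM Ha z (proj2 Hz)). apply Cmult_neq_0; assumption.
  - rewrite (quot_factor M b a Hb HM Ha z (proj2 Hz)) by assumption. fold T U.
    replace (1 + U / (1 + T) - 1)%C with (U / (1 + T))%C by ring.
    rewrite Cmod_div by assumption.
    assert (HU0 := Cmod_ge_0 U).
    assert (E : Cmod U / Cmod (1 + T)%C * Cmod (1 + T)%C = Cmod U) by (field; lra).
    assert (0 <= Cmod U / Cmod (1 + T)%C) by (apply Rdiv_le_0_compat; lra).
    nra.
Qed.

Lemma majG_le_bound M b al r : 0 <= b -> 0 < M -> 0 <= al < 1 -> 0 <= r < 1 ->
  majG M b al r <= 1 - al ->
  majT M b r < 1 /\ majU M b r <= (1 - al) * (1 - majT M b r).
Proof.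
  intros Hb HM Hal Hr HG. rewrite (majG_split M b Hb HM) in HG by exact Hr.
  assert (H1 := majT_le_majU M b Hb HM r Hr). assert (H2 := majT_nonneg M b Hb HM r Hr).
  split; nra.
Qed.

Lemma classF_quot_sub1_le M b al r0 a z : 0 <= b -> 0 < M -> 0 <= al < 1 -> 0 < r0 < 1 ->
  majG M b al r0 = 1 - al -> classF M b a -> Cmod z <= r0 ->
  (0 < Cmod z -> fval a z <> 0%C) /\ Cmod (quot a z - 1)%C <= 1 - al /\
  (Cmod z < r0 -> Cmod (quot a z - 1)%C < 1 - al).
Proof.
  intros Hb HM Hal Hr0 HG Ha Hz.
  destruct (Req_dec (Cmod z) 0) as [E|Ne].
  - apply Cmod_eq_0 in E. subst z. unfold quot.
    destruct (Ceq_dec 0 0) as [_|]; [| contradiction].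
    replace (1 - 1)%C with (RtoC 0) by ring. rewrite Cmod_0. lra.
  - assert (Hpos : 0 < Cmod z) by (assert (H := Cmod_ge_0 z); lra).
    assert (HGz : majG M b al (Cmod z) <= 1 - al).
    { destruct (Req_dec (Cmod z) r0) as [->|Hn]; [lra |].
      rewrite <- HG. left. apply majG_lt; lra. }
    destruct (majG_le_bound M b al (Cmod z) Hb HM Hal ltac:(lra) HGz) as [HQ HP].
    destruct (classF_quot_estimate M b a z Hb HM Ha ltac:(lra) HQ) as [Hf Hq].
    assert (0 <= Cmod (quot a z - 1)%C) by apply Cmod_ge_0.
    split; [intros _; exact Hf | split; [nra |]].
    intros Hlt. assert (HGs : majG M b al (Cmod z) < 1 - al) by (rewrite <- HG; apply majG_lt; lra).
    rewrite (majG_split M b Hb HM) in HGs by lra. nra.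
Qed.

Definition extremal (M b : R) (n : nat) : C :=
  match n with O => 0%C | S O => 1%C | S (S m) => RtoC (- maj M b m) end.

Lemma classF_extremal M b : 0 <= b -> 0 < M -> classF M b (extremal M b).
Proof.
  intros Hb HM. split; [reflexivity | split; [reflexivity | split]].
  - simpl. rewrite Cmod_R, Rabs_Ropp, Rabs_pos_eq; lra.
  - intros n Hn. destruct n as [|[|[|m]]]; try lia. unfold extremal.
    rewrite Cmod_R, Rabs_Ropp, Rabs_pos_eq by (apply (maj_nonneg M b Hb HM)). unfold maj. lra.
Qed.

Lemma quot_extremal M b r : 0 <= b -> 0 < M -> 0 < r < 1 -> majT M b r < 1 ->
  quot (extremal M b) (RtoC r) = RtoC (1 - majU M b r / (1 - majT M b r)).
Proof.
  intros Hb HM Hr HQ.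
  assert (Hz : Cmod (RtoC r) < 1) by (rewrite Cmod_R, Rabs_pos_eq; lra).
  assert (HT : CSeries (tailT (extremal M b) (RtoC r)) = RtoC (- majT M b r)).
  { unfold majT, majU. rewrite <- Series_opp, <- CSeries_RtoC. apply CSeries_ext. intros n.
    unfold tailT, extremal. rewrite <- RtoC_pow, <- RtoC_mult. f_equal. ring. }
  assert (HU : CSeries (tailU (extremal M b) (RtoC r)) = RtoC (- majU M b r)).
  { unfold majT, majU. rewrite <- Series_opp, <- CSeries_RtoC. apply CSeries_ext. intros n.
    unfold tailU, extremal. rewrite <- RtoC_pow, <- !RtoC_mult. f_equal. ring. }
  rewrite (quot_factor M b _ Hb HM (classF_extremal M b Hb HM) _ Hz), HT, HU.
  - rewrite <- RtoC_plus, <- RtoC_div by lra. rewrite <- RtoC_plus. f_equal. field. lra.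
  - apply Cmod_pos_neq_0. rewrite Cmod_R, Rabs_pos_eq; lra.
  - rewrite HT, <- RtoC_plus. apply Cmod_pos_neq_0. rewrite Cmod_R, Rabs_pos_eq; lra.
Qed.

Lemma extremal_quot_lt M b al r0 r : 0 <= b -> 0 < M -> 0 <= al < 1 -> 0 < r0 < 1 ->
  majG M b al r0 = 1 - al -> r0 < r <= 1 ->
  exists rho q, 0 < rho < r /\ rho < 1 /\
    quot (extremal M b) (RtoC rho) = RtoC q /\ q < al.
Proof.
  intros Hb HM Hal Hr0 HG Hr.
  destruct (majG_le_bound M b al r0 Hb HM Hal ltac:(lra) ltac:(lra)) as [HQ _].
  assert (Hgap : 0 < 1 - majT M b r0) by lra.
  destruct (proj1 (continuity_pt_locally _ _) (majT_continuous M b Hb HM r0 ltac:(lra))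
              (mkposreal _ Hgap)) as [del Hdel].
  set (rho := Rmin (r0 + del / 2) ((r0 + r) / 2)).
  assert (Hrho : r0 < rho <= (r0 + r) / 2).
  { split; [unfold rho, Rmin; destruct (Rle_dec _ _); destruct del; simpl in *; lra |].
    apply Rmin_r. }
  assert (HQrho : majT M b rho < 1).
  { assert (Hball : Rabs (rho - r0) < del).
    { rewrite Rabs_pos_eq by lra. assert (rho <= r0 + del / 2) by apply Rmin_l.
      destruct del; simpl in *; lra. }
    specialize (Hdel rho Hball). simpl in Hdel.
    assert (H := Rle_abs (majT M b rho - majT M b r0)). lra. }
  assert (HGrho : 1 - al < majG M b al rho) by (rewrite <- HG; apply majG_lt; lra).
  rewrite (majG_split M b Hb HM) in HGrho by lra.
  exists rho, (1 - majU M b rho / (1 - majT M b rho)).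
  split; [lra | split; [lra | split]].
  - apply quot_extremal; lra.
  - assert (E : majU M b rho / (1 - majT M b rho) * (1 - majT M b rho) = majU M b rho)
      by (field; lra).
    nra.
Qed.

Lemma Re_ge_1_sub_Cmod (w : C) : 1 - Cmod (w - 1)%C <= Re w.
Proof.
  assert (H := re_le_Cmod (w - 1)%C).
  assert (H2 := Rle_abs (- Re (w - 1)%C)). rewrite Rabs_Ropp in H2.
  replace (Re (w - 1)%C) with (Re w - 1) in * by (destruct w; simpl; ring). lra.
Qed.

Lemma is_lub_starlike_radii M b al r0 : 0 <= b -> 0 < M -> 0 <= al < 1 -> 0 < r0 < 1 ->
  majG M b al r0 = 1 - al -> is_lub (starlike_radii M b al) r0.
Proof.
  intros Hb HM Hal Hr0 HG. split.
  - intros r [Hr Hall]. destruct (Rle_lt_dec r r0) as [|Hlt]; [assumption | exfalso].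
    destruct (extremal_quot_lt M b al r0 r Hb HM Hal Hr0 HG ltac:(lra))
      as (rho & q & Hrho & _ & Hq & Hqal).
    destruct (Hall _ (classF_extremal M b Hb HM)) as [_ Hstar].
    specialize (Hstar (RtoC rho) ltac:(rewrite Cmod_R, Rabs_pos_eq; lra)).
    rewrite Hq in Hstar. simpl in Hstar. lra.
  - intros ub Hub. apply Hub. split; [lra |]. intros a Ha.
    split; intros z Hz;
      destruct (classF_quot_sub1_le M b al r0 a z Hb HM Hal Hr0 HG Ha ltac:(lra))
        as (Hf & _ & Hlt).
    + apply Hf. lra.
    + assert (H := Re_ge_1_sub_Cmod (quot a z)). specialize (Hlt Hz). lra.
Qed.

Lemma is_lub_parabolic_radii M b rp : 0 <= b -> 0 < M -> 0 < rp < 1 ->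
  majG M b (1 / 2) rp = 1 - 1 / 2 -> is_lub (parabolic_radii M b) rp.
Proof.
  intros Hb HM Hrp HG. assert (Hhalf : 0 <= 1 / 2 < 1) by lra. split.
  - intros r [Hr Hall]. destruct (Rle_lt_dec r rp) as [|Hlt]; [assumption | exfalso].
    destruct (extremal_quot_lt M b (1 / 2) rp r Hb HM Hhalf Hrp HG ltac:(lra))
      as (rho & q & Hrho & _ & Hq & Hqal).
    specialize (Hall _ (classF_extremal M b Hb HM) (RtoC rho)
                  ltac:(rewrite Cmod_R, Rabs_pos_eq; lra)).
    rewrite Hq, <- RtoC_minus, Cmod_R, Rabs_left1 in Hall by lra. simpl in Hall. lra.
  - intros ub Hub. apply Hub. split; [lra |]. intros a Ha z Hz.
    destruct (classF_quot_sub1_le M b (1 / 2) rp a z Hb HM Hhalf Hrp HG Ha ltac:(lra))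
      as (_ & _ & Hlt).
    assert (H := Re_ge_1_sub_Cmod (quot a z)). specialize (Hlt Hz). lra.
Qed.

Theorem theorem2p8 (M b alpha r0 rp : R) :
  0 <= b <= 1 -> 0 < M -> 0 <= alpha < 1 ->
  is_r0 M b alpha r0 -> is_r0 M b (1 / 2) rp ->
  (* (i) *)
  (forall a, classF M b a -> forall z : C, Cmod z <= r0 ->
     (0 < Cmod z -> fval a z <> 0%C) /\
     Cmod (quot a z - 1)%C <= 1 - alpha) /\
  (* (ii) *)
  is_lub (starlike_radii M b alpha) r0 /\
  (* (iii) *)
  is_lub (parabolic_radii M b) rp.
Proof.
  intros [Hb _] HM Hal [Hr0 [Heq0 _]] [Hrp [Heqp _]].
  assert (HG0 := majG_eq_of_r0_eq M b Hb HM alpha r0 Hal Hr0 Heq0).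
  assert (HGp := majG_eq_of_r0_eq M b Hb HM (1 / 2) rp ltac:(lra) Hrp Heqp).
  split; [| split].
  - intros a Ha z Hz.
    destruct (classF_quot_sub1_le M b alpha r0 a z Hb HM Hal Hr0 HG0 Ha Hz) as (Hf & Hq & _).
    split; assumption.
  - exact (is_lub_starlike_radii M b alpha r0 Hb HM Hal Hr0 HG0).
  - exact (is_lub_parabolic_radii M b rp Hb HM Hrp HGp).
Qed.
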